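(* In the polarized setting below, for $t\in H^0$ let $D(t):V_w\to V_w$ be multiplication by $t$, and for $0\le p\le w-1$ write $D(t)|_{H^p}=D^-_p(t)+D^0_p(t)+D^+_p(t)$ with $D^-_p(t)\in\mathrm{Hom}(H^p,H^{p-1})$, $D^0_p(t)\in\mathrm{Hom}(H^p,H^p)$, $D^+_p(t)\in\mathrm{Hom}(H^p,H^{p+1})$ (where $D^-_0(t)=0$, $D^+_{w-1}(t)=0$); set $D^{\pm}(t)=\sum_pD^{\pm}_p(t)$, $D^0(t)=\sum_pD^0_p(t)$ as endomorphisms of $V_w$. Then $D(t)=D^-(t)+D^0(t)+D^+(t)$ on $V_w$, $D^0(t)$ preserves the grading $V_w=\bigoplus_{p=0}^{w-1}H^p$ and $D^{\pm}(t)$ shift it by $\pm1$, and for all $t,t'\in H^0$: (i) $D^+(t)D^+(t')=D^+(t')D^+(t)$ and $D^-(t)D^-(t')=D^-(t')D^-(t)$; (ii) $D^0(t)D^{\pm}(t')+D^{\pm}(t)D^0(t')=D^0(t')D^{\pm}(t)+D^{\pm}(t')D^0(t)$; (iii) $D^0(t)D^0(t')-D^0(t')D^0(t)+D^+(t)D^-(t')-D^+(t')D^-(t)+D^-(t)D^+(t')-D^-(t')D^+(t)=0$. (Equivalently, writing $D,D^0,D^{\pm}:V_w\to (H^0)^*\otimes V_w$: $D\wedge D=0$, $D^{\pm}\wedge D^{\pm}=0$, $D^0\wedge D^{\pm}+D^{\pm}\wedge D^0=0$, $D^0\wedge D^0+D^+\wedge D^-+D^-\wedge D^+=0$.)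
   Context: Polarized setting. Let $X$ be a smooth complex projective variety of dimension $n\ge2$ with canonical divisor $K_X$, $\mathcal E$ a rank $n$ holomorphic vector bundle with $\mathcal O_X(L)=\det\mathcal E$ and $H^i(\mathcal O_X(-L))=0$ for $i\le n-1$. Let $e\in H^0(\mathcal E)$ be a section whose zero scheme $Z=Z_e$ is a finite set of $d$ distinct reduced points. Put $A=H^0(\mathcal O_Z)$ and $E_Z=\mathrm{Ext}^{n-1}(\mathcal I_Z(L),\mathcal O_X)$, viewed via Serre duality $E_Z\cong H^1(\mathcal I_Z(L+K_X))^*$ and dualizing the surjection $H^0(\mathcal O_Z(L+K_X))\to H^1(\mathcal I_Z(L+K_X))$ as a subspace of $H^0(\mathcal O_Z(L+K_X))^*\cong H^0(\omega_Z\otimes\mathcal O_X(-L-K_X))$, sections of an invertible sheaf on $Z$. An element $\alpha\in E_Z$ is regular if $f\mapsto f\alpha$ is an isomorphism $A\to H^0(\mathcal O_Z(L+K_X))^*$ (i.e. $\alpha$ vanishes at no point of $Z$). For regular $\alpha$ put $V_1=\{\beta/\alpha:\beta\in E_Z\}\subset A$ (it contains $1$), let $V_k$ be the span of all products of $k$ elements of $V_1$ (so $V_1\subset V_2\subset\cdots$), $V_0=0$, and let $w\ge1$ be the least integer with $V_k=V_w$ for all $k\ge w$. Let $q(f,g)=\sum_{z\in Z}f(z)g(z)$ be the trace form on $A$; $\alpha$ is polarizing if it is regular and $q|_{V_k}$ is non-degenerate for all $k\ge1$. For polarizing $\alpha$ define $H^p=V_p^{\perp}\cap V_{p+1}$ for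 $0\le p\le w-1$ and $H^w=V_w^{\perp}$, orthogonal complements taken in $A$ with respect to $q$. Then $A=\bigoplus_{p=0}^wH^p$, $H^0=V_1$ and $V_w=\bigoplus_{p=0}^{w-1}H^p$. *)

(* The finite set Z of d reduced points is 'I_d; the algebra
   A = H^0(O_Z) of functions Z -> F is modelled by row vectors 'rV[F]_d with
   pointwise product; subspaces of A are row spaces of matrices (%MS). *)
From HB Require Import structures.
From mathcomp Require Import all_boot all_order all_algebra.
Set Implicit Arguments. Unset Strict Implicit. Unset Printing Implicit Defensive.
Import Order.TTheory GRing.Theory Num.Theory.
Local Open Scope ring_scope.

Section Polarized.
Variables (F : fieldType) (d : nat).

Definition pmul (f g : 'rV[F]_d) : 'rV[F]_d := \row_i (f 0 i * g 0 i).

Definition oneZ : 'rV[F]_d := const_mx 1.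

Definition qform (f g : 'rV[F]_d) : F := \sum_(i < d) f 0 i * g 0 i.

Definition prodsp (U W : 'M[F]_d) : 'M[F]_d :=
  (\sum_(i < d) \sum_(j < d) <<pmul (row i U) (row j W)>>)%MS.

Definition Vk (V1 : 'M[F]_d) (k : nat) : 'M[F]_d :=
  match k with
  | 0 => 0
  | k'.+1 => iter k' (fun U => prodsp U V1) V1
  end.

Definition nondeg (U : 'M[F]_d) : Prop :=
  forall f : 'rV[F]_d, (f <= U)%MS ->
    (forall g : 'rV[F]_d, (g <= U)%MS -> qform f g = 0) -> f = 0.

Definition perp (U : 'M[F]_d) : 'M[F]_d := kermx U^T.

Definition Hp (V1 : 'M[F]_d) (w p : nat) : 'M[F]_d :=
  if (p < w)%N then (perp (Vk V1 p) :&: Vk V1 p.+1)%MS else perp (Vk V1 w).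

Definition projH (V1 : 'M[F]_d) (w p : nat) (v : 'rV[F]_d) : 'rV[F]_d :=
  v *m proj_mx (Hp V1 w p) (\sum_(j < w.+1 | (j != p :> nat)) Hp V1 w j)%MS.

Definition Dmul (t v : 'rV[F]_d) : 'rV[F]_d := pmul t v.

Definition Dminus (V1 : 'M[F]_d) (w : nat) (t v : 'rV[F]_d) : 'rV[F]_d :=
  \sum_(p < w | (0 < p)%N) projH V1 w p.-1 (Dmul t (projH V1 w p v)).

Definition Dzero (V1 : 'M[F]_d) (w : nat) (t v : 'rV[F]_d) : 'rV[F]_d :=
  \sum_(p < w) projH V1 w p (Dmul t (projH V1 w p v)).

Definition Dplus (V1 : 'M[F]_d) (w : nat) (t v : 'rV[F]_d) : 'rV[F]_d :=
  \sum_(p < w | (p.+1 < w)%N) projH V1 w p.+1 (Dmul t (projH V1 w p v)).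

End Polarized.

From HB Require Import structures.
From mathcomp Require Import all_boot all_order all_algebra.
From mathcomp Require Import zify.
Import GRing.Theory.
Local Open Scope ring_scope.
Set Implicit Arguments. Unset Strict Implicit. Unset Printing Implicit Defensive.

(* A = H^0 + ... + H^w is a q-orthogonal decomposition with
   V_k = H^0 + ... + H^(k-1).  Multiplication by t in V_1 is self-adjoint for
   the trace form and maps V_k into V_(k+1), so it sends H^p into
   V_(p+2) :&: V_(p-1)^perp = H^(p-1) + H^p + H^(p+1): the operator D(t) is the
   sum of its homogeneous parts D^k(t) of degrees k = -1, 0, 1.  Since
   multiplication operators commute, D(t) D(t') = D(t') D(t) on V_w, and the
   homogeneous components of degrees 2, -2, 1, -1, 0 of this identity are (i),
   (ii) and (iii). *)

Lemma subr_sum3 (V : zmodType) (x1 x2 x3 y1 y2 y3 : V) :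
  x1 - y1 + x2 - y2 + x3 - y3 = x1 + x2 + x3 - (y1 + y2 + y3).
Proof. by rewrite !opprD !addrA [RHS](ACl (1*4*2*5*3*6)%AC). Qed.

Section GradedCommutator.
Variables (F : fieldType) (d : nat) (G P : int -> 'M[F]_d).
Hypothesis proj_graded : forall m n (a : 'rV[F]_d),
  (a <= G m)%MS -> a *m P n = if m == n then a else 0.

Definition homogeneous (k : int) (M : 'M[F]_d) :=
  forall n (a : 'rV[F]_d), (a <= G n)%MS -> (a *m M <= G (n + k))%MS.

Lemma homogeneous_mul k l M N :
  homogeneous k M -> homogeneous l N -> homogeneous (k + l) (M *m N).
Proof. by move=> hM hN n a /hM /hN; rewrite mulmxA addrA. Qed.

Lemma graded_component n (a : 'rV[F]_d) (s : seq int) (M : int -> int -> 'M[F]_d) :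
  (a <= G n)%MS -> (forall i j, homogeneous (i + j) (M i j)) -> forall m,
  a *m (\sum_(i <- s) \sum_(j <- s) M i j) *m P (n + m)
    = \sum_(i <- s) \sum_(j <- s | i + j == m) a *m M i j.
Proof.
move=> ha hM m; rewrite mulmx_sumr mulmx_suml; apply: eq_bigr => i _.
rewrite mulmx_sumr mulmx_suml [RHS]big_mkcond; apply: eq_bigr => j _.
by rewrite (proj_graded _ (hM i j n a ha)) (inj_eq (addrI n)).
Qed.

Lemma graded_commutator (A B : int -> 'M[F]_d) (s : seq int) n (a : 'rV[F]_d) :
  (forall k, homogeneous k (A k)) -> (forall k, homogeneous k (B k)) ->
  (a <= G n)%MS ->
  a *m (\sum_(i <- s) A i) *m (\sum_(j <- s) B j)
    = a *m (\sum_(j <- s) B j) *m (\sum_(i <- s) A i) ->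
  forall m, \sum_(i <- s) \sum_(j <- s | i + j == m) a *m (A i *m B j)
          = \sum_(i <- s) \sum_(j <- s | i + j == m) a *m (B j *m A i).
Proof.
move=> hA hB ha hAB m.
have hAB_hom i j : homogeneous (i + j) (A i *m B j) by exact: homogeneous_mul.
have hBA_hom i j : homogeneous (i + j) (B j *m A i).
  by rewrite addrC; exact: homogeneous_mul.
rewrite -(graded_component s ha hAB_hom) -(graded_component s ha hBA_hom).
congr (_ *m _); move: hAB; rewrite -!mulmxA !mulmx_suml.
under eq_bigr do rewrite mulmx_sumr.
under [in RHS]eq_bigr do rewrite mulmx_sumr.
by rewrite [in RHS]exchange_big.
Qed.

Lemma tridiagonal_commutator (A B : int -> 'M[F]_d) n (a : 'rV[F]_d) :
  (forall k, homogeneous k (A k)) -> (forall k, homogeneous k (B k)) ->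
  (a <= G n)%MS ->
  a *m (A (-1) + A 0 + A 1) *m (B (-1) + B 0 + B 1)
    = a *m (B (-1) + B 0 + B 1) *m (A (-1) + A 0 + A 1) ->
  [/\ a *m (A 1 *m B 1) = a *m (B 1 *m A 1),
      a *m (A (-1) *m B (-1)) = a *m (B (-1) *m A (-1)),
      a *m (A 1 *m B 0 + A 0 *m B 1) = a *m (B 1 *m A 0 + B 0 *m A 1),
      a *m (A (-1) *m B 0 + A 0 *m B (-1)) = a *m (B (-1) *m A 0 + B 0 *m A (-1))
    & a *m (A 0 *m B 0 + A (-1) *m B 1 + A 1 *m B (-1))
      = a *m (B 0 *m A 0 + B (-1) *m A 1 + B 1 *m A (-1))].
Proof.
move=> hA hB ha hAB.
have := graded_commutator (s := [:: -1; 0; 1]) hA hB ha.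
rewrite !big_cons !big_nil !addr0 !addrA => /(_ hAB) hm.
have := hm 2; have := hm (-2); have := hm 1; have := hm (-1); have := hm 0.
rewrite !big_cons !big_nil /= !(addr0, add0r) !addrA !mulmxDr.
move=> *; split=> //; [rewrite addrC | rewrite [RHS]addrC |] => //.
by rewrite [LHS](ACl (2*1*3)%AC) [RHS](ACl (3*1*2)%AC).
Qed.

End GradedCommutator.

(* Orthogonality for the trace form, as qform f g = (f *m g^T) 0 0. *)
Local Notation "A _|_ B" := (A <= kermx B^T)%MS (at level 69).

Section TraceForm.
Variables (F : fieldType) (d : nat).
Implicit Types (f g t : 'rV[F]_d) (U W : 'M[F]_d).

Lemma pmul_diag_mx f g : pmul f g = g *m diag_mx f.
Proof. by apply/rowP => i; rewrite mul_mx_diag !mxE mulrC. Qed.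

Lemma pmulC f g : pmul f g = pmul g f.
Proof. by apply/rowP => i; rewrite !mxE mulrC. Qed.

Lemma pmul_sub_prodsp U W f g :
  (f <= U)%MS -> (g <= W)%MS -> (pmul f g <= prodsp U W)%MS.
Proof.
case/submxP=> a ->; case/submxP=> b ->.
have pmulZl c f' g' : pmul (c *: f') g' = c *: pmul f' g'.
  by apply/rowP => k; rewrite !mxE mulrA.
have pmul_suml (h : 'I_d -> 'rV[F]_d) g' : pmul (\sum_i h i) g' = \sum_i pmul (h i) g'.
  apply/rowP => k; rewrite !mxE !summxE big_distrl /=.
  by apply: eq_bigr => i _; rewrite !mxE.
rewrite !mulmx_sum_row pmul_suml; apply: summx_sub => i _.
rewrite pmulZl; apply: scalemx_sub; rewrite pmulC pmul_suml.
apply: summx_sub => j _; rewrite pmulZl; apply: scalemx_sub; rewrite pmulC.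
by apply: (sumsmx_sup i) => //; apply: (sumsmx_sup j) => //; rewrite genmxE.
Qed.

Lemma orthE m n (A : 'M[F]_(m, d)) (B : 'M[F]_(n, d)) :
  (A _|_ B) = (A *m B^T == 0).
Proof. exact/sub_kermxP/eqP. Qed.

Lemma orth_sym m n (A : 'M[F]_(m, d)) (B : 'M[F]_(n, d)) : (A _|_ B) = (B _|_ A).
Proof. by rewrite !orthE -(inj_eq (@trmx_inj _ _ _)) trmx_mul trmxK trmx0. Qed.

Lemma orthS m n m' n' (A : 'M[F]_(m, d)) (B : 'M[F]_(n, d))
    (A' : 'M[F]_(m', d)) (B' : 'M[F]_(n', d)) :
  (A' <= A)%MS -> (B' <= B)%MS -> A _|_ B -> A' _|_ B'.
Proof.
case/submxP=> X ->; case/submxP=> Y ->; rewrite !orthE => /eqP AB0.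
by rewrite trmx_mul -mulmxA (mulmxA A) AB0 mul0mx mulmx0.
Qed.

Lemma orth_sumsmx m (A : 'M[F]_(m, d)) n (P : pred 'I_n) (B : 'I_n -> 'M[F]_d) :
  (forall i, P i -> A _|_ B i) -> A _|_ (\sum_(i | P i) B i)%MS.
Proof. by move=> AB; rewrite orth_sym; apply/sumsmx_subP => i /AB; rewrite orth_sym. Qed.

Lemma orth1_eq0 m (A : 'M[F]_(m, d)) : A _|_ (1%:M : 'M[F]_d) -> A = 0.
Proof. by rewrite orthE trmx1 mulmx1 => /eqP. Qed.

Lemma orth_mul_diag_mx m n (A : 'M[F]_(m, d)) (B : 'M[F]_(n, d)) t :
  (A *m diag_mx t _|_ B) = (A _|_ B *m diag_mx t).
Proof. by rewrite !orthE trmx_mul tr_diag_mx mulmxA. Qed.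

Lemma nondeg_capmx_perp U : nondeg U -> (U :&: perp U)%MS = 0.
Proof.
move=> ndU; apply/eqP; rewrite -submx0; apply/row_subP => i; rewrite submx0.
have [xU xUp] : (row i (U :&: perp U) <= U)%MS /\ (row i (U :&: perp U) <= perp U)%MS.
  by split; apply: submx_trans (row_sub _ _) _; rewrite ?capmxSl ?capmxSr.
apply/eqP/ndU => // g gU; rewrite /qform.
have := orthS (submx_refl _) gU xUp; rewrite orthE => /eqP/matrixP/(_ 0 0).
rewrite !mxE => x0; rewrite -[RHS]x0.
by apply: eq_bigr => j _; rewrite !mxE.
Qed.

Lemma nondeg_sub_addsmx U W :
  nondeg U -> (U <= W)%MS -> (W <= U + (perp U :&: W))%MS.
Proof.
move=> ndU sUW; rewrite (matrix_modl _ sUW) sub_capmx submx_refl andbT.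
apply/submx_full/eqP; have := mxrank_sum_cap U (perp U).
rewrite nondeg_capmx_perp // mxrank0 addn0 mxrank_ker mxrank_tr => ->.
by rewrite subnKC // rank_leq_col.
Qed.

End TraceForm.

Section Polarized.
Variables (F : fieldType) (d : nat) (V1 : 'M[F]_d) (w : nat).
Hypothesis one_sub_V1 : (oneZ F d <= V1)%MS.
Hypothesis polarizing : forall k, (1 <= k)%N -> nondeg (Vk V1 k).
Hypothesis Vk_stable : forall k, (w <= k)%N -> (Vk V1 k == Vk V1 w)%MS.

Local Notation V := (Vk V1).
Local Notation H := (Hp V1 w).
Local Notation compl p := (\sum_(j < w.+1 | (j != p :> nat)) Hp V1 w j)%MS.
Implicit Types (t x y : 'rV[F]_d).

Lemma Vk_succ k : (0 < k)%N -> V k.+1 = prodsp (V k) V1.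
Proof. by case: k. Qed.

Lemma mul_diag_Vk k m (A : 'M[F]_(m, d)) t :
  (A <= V k)%MS -> (t <= V1)%MS -> (A *m diag_mx t <= V k.+1)%MS.
Proof.
case: k => [|k] sAV tV1; first by move: sAV; rewrite submx0 => /eqP ->; rewrite mul0mx sub0mx.
apply/row_subP => i; rewrite row_mul -pmul_diag_mx pmulC Vk_succ //.
exact: pmul_sub_prodsp (submx_trans (row_sub i A) sAV) tV1.
Qed.

Lemma Vk_subS k : (V k <= V k.+1)%MS.
Proof.
case: k => [|k]; first exact: sub0mx.
apply/row_subP => i; rewrite (@Vk_succ k.+1) //.
have -> : row i (V k.+1) = pmul (row i (V k.+1)) (oneZ F d).
  by apply/rowP => j; rewrite !mxE mulr1.
exact: pmul_sub_prodsp (row_sub _ _) one_sub_V1.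
Qed.

Lemma Vk_sub j k : (j <= k)%N -> (V j <= V k)%MS.
Proof.
elim: k => [|k IHk]; first by rewrite leqn0 => /eqP ->.
by rewrite leq_eqVlt ltnS => /predU1P [-> // | /IHk/submx_trans]; apply; apply: Vk_subS.
Qed.

Lemma mul_diag_Vw m (A : 'M[F]_(m, d)) t :
  (A <= V w)%MS -> (t <= V1)%MS -> (A *m diag_mx t <= V w)%MS.
Proof.
by move=> sAV /(mul_diag_Vk sAV)/submx_trans; apply; case/andP: (Vk_stable (leqnSn w)).
Qed.

Lemma nondeg_Vk k : nondeg (V k).
Proof. by case: k => [f|k]; [rewrite submx0 => /eqP | apply: polarizing]. Qed.

Lemma Hp_lt p : (p < w)%N -> H p = (perp (V p) :&: V p.+1)%MS.
Proof. by rewrite /Hp => ->. Qed.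

Lemma Hp_ge p : (w <= p)%N -> H p = perp (V w).
Proof. by rewrite /Hp ltnNge => ->. Qed.

Lemma Hp_sub_Vk p : (p < w)%N -> (H p <= V p.+1)%MS.
Proof. by move=> /Hp_lt ->; apply: capmxSr. Qed.

Lemma Hp_orth_Vk p : (p <= w)%N -> H p _|_ V p.
Proof.
rewrite leq_eqVlt => /predU1P [-> | /Hp_lt ->]; first by rewrite Hp_ge.
exact: capmxSl.
Qed.

Lemma Vk_sub_addsmx p : (p < w)%N -> (V p.+1 <= V p + H p)%MS.
Proof. by move=> /Hp_lt ->; apply: nondeg_sub_addsmx (nondeg_Vk (k := p)) (Vk_subS p). Qed.

Lemma Vk_sub_sum_Hp k : (k <= w)%N -> (V k <= \sum_(j < w.+1 | (j < k)%N) H j)%MS.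
Proof.
elim: k => [|k IHk] ltkw; first exact: sub0mx.
apply: submx_trans (Vk_sub_addsmx ltkw) _; rewrite addsmx_sub; apply/andP; split.
  apply: submx_trans (IHk (ltnW ltkw)) _; apply/sumsmx_subP => j ltjk.
  by apply: (sumsmx_sup j) => //; apply: ltnW.
by apply: (sumsmx_sup (Ordinal (ltnW ltkw : (k < w.+1)%N))).
Qed.

Lemma sum_Hp_full : ((1%:M : 'M[F]_d) <= \sum_(j < w.+1) H j)%MS.
Proof.
have := nondeg_sub_addsmx (nondeg_Vk (k := w)) (submx1 (V w)).
move/submx_trans; apply; rewrite addsmx_sub; apply/andP; split.
  apply: submx_trans (Vk_sub_sum_Hp (leqnn w)) _.
  by apply/sumsmx_subP => j _; apply: (sumsmx_sup j).
by apply: submx_trans (sumsmx_sup ord_max _ (submx_refl _)); rewrite // Hp_ge ?capmxSl.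
Qed.

Lemma Hp_orth i j : (i <= w)%N -> (j <= w)%N -> i != j -> H i _|_ H j.
Proof.
wlog ltij : i j / (i < j)%N.
  move=> hwlog lei lej neij; case: (ltngtP i j) => [ltij | ltji | eqij].
  - exact: hwlog.
  - by rewrite orth_sym; apply: hwlog; rewrite // eq_sym.
  - by rewrite eqij eqxx in neij.
move=> _ lej _; rewrite orth_sym; apply: orthS (submx_refl _) _ (Hp_orth_Vk lej).
exact: submx_trans (Hp_sub_Vk (leq_trans ltij lej)) (Vk_sub ltij).
Qed.

Lemma orth_Hp_eq0 m (A : 'M[F]_(m, d)) : (forall j, (j <= w)%N -> A _|_ H j) -> A = 0.
Proof.
move=> AH; apply: orth1_eq0; apply: orthS (submx_refl _) sum_Hp_full _.
by apply: orth_sumsmx => j _; apply: AH; rewrite -ltnS.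
Qed.

Lemma compl_orth_Hp p : (p <= w)%N -> compl p _|_ H p.
Proof. by move=> lepw; apply/sumsmx_subP => j nejp; apply: Hp_orth => //; rewrite -ltnS. Qed.

Lemma capmx_Hp_compl p : (p <= w)%N -> (H p :&: compl p)%MS = 0.
Proof.
move=> lepw; apply: orth_Hp_eq0 => j lejw; case: (eqVneq j p) => [-> | nejp].
  exact: submx_trans (capmxSr _ _) (compl_orth_Hp lepw).
by apply: submx_trans (capmxSl _ _) (Hp_orth lepw lejw _); rewrite eq_sym.
Qed.

Lemma Hp_compl_full p : ((1%:M : 'M[F]_d) <= H p + compl p)%MS.
Proof.
apply: submx_trans sum_Hp_full _; apply/sumsmx_subP => j _.
case: (eqVneq (j : nat) p) => [<- | nejp]; first exact: addsmxSl.
by apply: submx_trans (addsmxSr _ _); apply: (sumsmx_sup j).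
Qed.

Lemma Vk_sub_compl k p : (k <= p)%N -> (p <= w)%N -> (V k <= compl p)%MS.
Proof.
move=> lekp lepw; apply: submx_trans (Vk_sub_sum_Hp (leq_trans lekp lepw)) _.
apply/sumsmx_subP => j ltjk; apply: (sumsmx_sup j) => //.
by rewrite neq_ltn (leq_trans ltjk lekp).
Qed.

(* Locked, so that rewriting with mulmxA does not unfold proj_mx. *)
Fact hproj_key : unit. Proof. by []. Qed.
Definition hproj p : 'M[F]_d := locked_with hproj_key (proj_mx (H p) (compl p)).

Lemma hprojE p : hproj p = proj_mx (H p) (compl p).
Proof. by rewrite /hproj locked_withE. Qed.

Lemma hproj_sub m (A : 'M[F]_(m, d)) p : (A *m hproj p <= H p)%MS.
Proof. by rewrite hprojE proj_mx_sub. Qed.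

Lemma hproj_Hp i j x : (i <= w)%N -> (j <= w)%N -> (x <= H i)%MS ->
  x *m hproj j = if i == j then x else 0.
Proof.
move=> leiw lejw xH; rewrite hprojE; case: eqVneq => [<- | neij].
  by apply: proj_mx_id xH; apply: capmx_Hp_compl.
apply: proj_mx_0; first exact: capmx_Hp_compl.
by apply: submx_trans xH _; apply: (sumsmx_sup (Ordinal (leiw : (i < w.+1)%N))); rewrite // eq_sym.
Qed.

Lemma orth_hproj_eq0 x p : (p <= w)%N -> x _|_ H p -> x *m hproj p = 0.
Proof.
move=> lepw xH; apply: orth_Hp_eq0 => j lejw; case: (eqVneq j p) => [-> | nejp].
  have -> : x *m hproj p = x - (x - x *m hproj p) by rewrite opprB addrC subrK.
  rewrite addmx_sub // eqmx_opp; apply: submx_trans (compl_orth_Hp lepw).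
  rewrite hprojE; apply: proj_mx_compl_sub.
  exact: submx_trans (submx1 x) (Hp_compl_full p).
by apply: submx_trans (hproj_sub _ _) (Hp_orth lepw lejw _); rewrite eq_sym.
Qed.

Lemma sum_hproj x : x = \sum_(p < w.+1) x *m hproj p.
Proof.
have /sub_sumsmxP [u xE] := submx_trans (submx1 x) sum_Hp_full.
rewrite {1}xE; apply: eq_bigr => p _; rewrite xE mulmx_suml (bigD1 p) //= big1.
  by rewrite (hproj_Hp (ltn_ord p) (ltn_ord p) (submxMl _ _)) eqxx addr0.
move=> q neqp; rewrite (hproj_Hp (ltn_ord q) (ltn_ord p) (submxMl _ _)).
by rewrite (inj_eq val_inj) (negbTE neqp).
Qed.

Lemma hproj_compl_eq0 x p : (p <= w)%N -> (x <= compl p)%MS -> x *m hproj p = 0.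
Proof. by move=> lepw; rewrite hprojE; apply: proj_mx_0; apply: capmx_Hp_compl. Qed.

Lemma hproj_inj x y : (forall p, (p <= w)%N -> x *m hproj p = y *m hproj p) -> x = y.
Proof.
move=> xy; rewrite (sum_hproj x) (sum_hproj y).
by apply: eq_bigr => p _; apply: xy; rewrite -ltnS.
Qed.

Lemma sum_hproj_Vw x : (x <= V w)%MS -> x = \sum_(p < w) x *m hproj p.
Proof.
move=> xV; rewrite {1}(sum_hproj x) big_ord_recr /= hproj_compl_eq0 ?addr0 //.
exact: submx_trans xV (Vk_sub_compl (leqnn w) (leqnn w)).
Qed.

Lemma eq_on_Vw (M N : 'M[F]_d) :
  (forall q x, (q < w)%N -> (x <= H q)%MS -> x *m M = x *m N) ->
  forall x, (x <= V w)%MS -> x *m M = x *m N.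
Proof.
move=> MN x /sum_hproj_Vw ->; rewrite !mulmx_suml.
by apply: eq_bigr => p _; apply: MN (ltn_ord p) (hproj_sub _ _).
Qed.

(* For j + 1 < q the component vanishes because multiplication by t is
   self-adjoint and t H^j <= V_q is orthogonal to x; otherwise because
   t x lies in V_(q+2) and in V_w. *)
Lemma mul_diag_hproj_eq0 t q j x : (t <= V1)%MS -> (q < w)%N -> (x <= H q)%MS ->
  (j <= w)%N -> [|| (j.+1 < q)%N, (q.+1 < j)%N | (w <= j)%N] ->
  x *m diag_mx t *m hproj j = 0.
Proof.
move=> tV1 ltqw xH lejw /or3P [ltj1q | ltq1j | lewj].
- apply: orth_hproj_eq0 => //; rewrite orth_mul_diag_mx.
  apply: orthS xH _ (Hp_orth_Vk (ltnW ltqw)).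
  have ltjw : (j < w)%N by apply: ltn_trans ltqw; apply: ltn_trans ltj1q.
  exact: submx_trans (mul_diag_Vk (Hp_sub_Vk ltjw) tV1) (Vk_sub ltj1q).
- apply: hproj_compl_eq0 => //; apply: submx_trans (Vk_sub_compl ltq1j lejw).
  exact: mul_diag_Vk (submx_trans xH (Hp_sub_Vk ltqw)) tV1.
- apply: hproj_compl_eq0 => //; apply: submx_trans (Vk_sub_compl lewj lejw).
  exact: mul_diag_Vw (submx_trans xH (submx_trans (Hp_sub_Vk ltqw) (Vk_sub ltqw))) tV1.
Qed.

(* The grading indexed by all integers, with zero pieces outside [0, w): this
   makes D^-_0(t) = 0 and D^+_(w-1)(t) = 0 automatic. *)
Definition Hgr (n : int) : 'M[F]_d :=
  if n is Posz p then (if (p < w)%N then H p else 0) else 0.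

Definition Pgr (n : int) : 'M[F]_d :=
  if n is Posz p then (if (p < w)%N then hproj p else 0) else 0.

Lemma Hgr_nat p : (p < w)%N -> Hgr p = H p.
Proof. by rewrite /Hgr => ->. Qed.

Lemma Hgr_succ p : Hgr (p%:Z + 1) = if (p.+1 < w)%N then H p.+1 else 0.
Proof. by rewrite -PoszD addn1. Qed.

Lemma Hgr_pred p : (p < w)%N -> Hgr (p%:Z - 1) = if (0 < p)%N then H p.-1 else 0.
Proof. by case: p => [|p] ltpw //=; rewrite subn1 /= (ltnW ltpw). Qed.

Lemma HgrP n x : (x <= Hgr n)%MS ->
  x = 0 \/ exists2 q, (q < w)%N & n = q%:Z /\ (x <= H q)%MS.
Proof.
case: n => [q | q] /=; last by rewrite submx0 => /eqP; left.
case: ifP => [ltqw xH | _]; first by right; exists q.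
by rewrite submx0 => /eqP; left.
Qed.

Lemma Pgr_sub m (A : 'M[F]_(m, d)) n : (A *m Pgr n <= Hgr n)%MS.
Proof. by case: n => [p|p] /=; rewrite ?mulmx0 ?sub0mx //; case: ifP; rewrite ?hproj_sub ?mulmx0 ?sub0mx. Qed.

Lemma Hgr_hproj n x j : (j <= w)%N -> (x <= Hgr n)%MS ->
  x *m hproj j = if n == j%:Z then x else 0.
Proof.
move=> lejw /HgrP [-> | [q ltqw [-> xH]]]; first by rewrite mul0mx if_same.
by rewrite eqz_nat; apply: hproj_Hp (ltnW ltqw) lejw xH.
Qed.

Lemma Pgr_graded m n x : (x <= Hgr m)%MS -> x *m Pgr n = if m == n then x else 0.
Proof.
move=> xH; case: n => [j | j] /=; last first.
  by case: eqP xH => [-> | _]; rewrite mulmx0 // submx0 => /eqP.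
case: ifP => ltjw; first exact: Hgr_hproj (ltnW ltjw) xH.
case: eqP xH => [-> | _]; rewrite mulmx0 //= ltjw submx0 => /eqP //.
Qed.

Definition Dpart t (k : int) : 'M[F]_d :=
  \sum_(p < w) hproj p *m diag_mx t *m Pgr (p%:Z + k).

Lemma Dpart_Hgr t k n x : (x <= Hgr n)%MS ->
  x *m Dpart t k = x *m diag_mx t *m Pgr (n + k).
Proof.
move=> /HgrP [-> | [q ltqw [-> xH]]]; first by rewrite !mul0mx.
rewrite mulmx_sumr (bigD1 (Ordinal ltqw)) //= big1 ?addr0.
  by rewrite !mulmxA (hproj_Hp (ltnW ltqw) (ltnW ltqw) xH) eqxx.
move=> p nepq; rewrite !mulmxA (hproj_Hp (ltnW ltqw) (ltnW (ltn_ord p)) xH).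
have -> : (q == p) = false by apply: contraNF nepq => /eqP qp; apply/eqP/val_inj.
by rewrite !mul0mx.
Qed.

Lemma Dpart_homogeneous t k : homogeneous Hgr k (Dpart t k).
Proof. by move=> n x /Dpart_Hgr ->; apply: Pgr_sub. Qed.

Lemma DmulE t x : Dmul t x = x *m diag_mx t.
Proof. exact: pmul_diag_mx. Qed.

Lemma DzeroE t x : Dzero V1 w t x = x *m Dpart t 0.
Proof.
rewrite /Dzero /projH /Dpart mulmx_sumr; apply: eq_bigr => p _.
by rewrite -!hprojE DmulE addr0 /= ltn_ord !mulmxA.
Qed.

Lemma DplusE t x : Dplus V1 w t x = x *m Dpart t 1.
Proof.
rewrite /Dplus /projH /Dpart mulmx_sumr big_mkcond; apply: eq_bigr => p _.
rewrite -!hprojE DmulE -PoszD addn1 /=; case: ifP => _; by rewrite !mulmxA ?mulmx0.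
Qed.

Lemma DminusE t x : Dminus V1 w t x = x *m Dpart t (-1).
Proof.
rewrite /Dminus /projH /Dpart mulmx_sumr big_mkcond; apply: eq_bigr => -[[|p] ltpw] _ /=.
  by rewrite !mulmx0.
by rewrite subn1 /= (ltnW ltpw) -!hprojE DmulE !mulmxA.
Qed.

Lemma mul_diag_Hgr t n x : (t <= V1)%MS -> (x <= Hgr n)%MS ->
  x *m diag_mx t = x *m (Dpart t (-1) + Dpart t 0 + Dpart t 1).
Proof.
move=> tV1 xHn; rewrite !mulmxDr !(Dpart_Hgr _ _ xHn).
case/HgrP: xHn => [-> | [q ltqw [-> xH]]]; first by rewrite !mul0mx !addr0.
set y := x *m diag_mx t; apply: hproj_inj => j lejw.
rewrite !mulmxDl !(Hgr_hproj lejw (Pgr_sub _ _)).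
have count k : (if q%:Z + k == j%:Z then y *m Pgr (q%:Z + k) else 0)
               = y *m Pgr j *+ (q%:Z + k == j%:Z) by case: eqP => [-> |].
rewrite !count -!mulrnDr /=; set c := (_ + _ + _)%N.
have [window | /negP outside] := boolP [&& (q <= j.+1)%N, (j <= q.+1)%N & (j < w)%N].
  have -> : c = 1%N by rewrite /c; lia.
  by case/and3P: window => _ _ ->.
rewrite (mul_diag_hproj_eq0 tV1 ltqw xH lejw); last by apply/negP; lia.
case: ifP => ltjw; last by rewrite mulmx0 mul0rn.
by have -> : c = 0%N by rewrite /c; lia.
Qed.

Lemma mul_diag_Vw_tridiag t x : (t <= V1)%MS -> (x <= V w)%MS ->
  x *m diag_mx t = x *m (Dpart t (-1) + Dpart t 0 + Dpart t 1).
Proof.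
move=> tV1; apply: eq_on_Vw => q y ltqw yH.
by apply: (mul_diag_Hgr (n := q%:Z) tV1); rewrite Hgr_nat.
Qed.

Lemma Dpart_commutator t t' x : (t <= V1)%MS -> (t' <= V1)%MS -> (x <= V w)%MS ->
  [/\ x *m (Dpart t' 1 *m Dpart t 1) = x *m (Dpart t 1 *m Dpart t' 1),
      x *m (Dpart t' (-1) *m Dpart t (-1)) = x *m (Dpart t (-1) *m Dpart t' (-1)),
      x *m (Dpart t' 1 *m Dpart t 0 + Dpart t' 0 *m Dpart t 1)
        = x *m (Dpart t 1 *m Dpart t' 0 + Dpart t 0 *m Dpart t' 1),
      x *m (Dpart t' (-1) *m Dpart t 0 + Dpart t' 0 *m Dpart t (-1))
        = x *m (Dpart t (-1) *m Dpart t' 0 + Dpart t 0 *m Dpart t' (-1))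
    & x *m (Dpart t' 0 *m Dpart t 0 + Dpart t' (-1) *m Dpart t 1
            + Dpart t' 1 *m Dpart t (-1))
      = x *m (Dpart t 0 *m Dpart t' 0 + Dpart t (-1) *m Dpart t' 1
              + Dpart t 1 *m Dpart t' (-1))].
Proof.
move=> tV1 t'V1 xV.
have commute y : (y <= V w)%MS ->
    y *m (Dpart t' (-1) + Dpart t' 0 + Dpart t' 1) *m (Dpart t (-1) + Dpart t 0 + Dpart t 1)
  = y *m (Dpart t (-1) + Dpart t 0 + Dpart t 1) *m (Dpart t' (-1) + Dpart t' 0 + Dpart t' 1).
  move=> yV; rewrite -!mul_diag_Vw_tridiag ?mul_diag_Vw //.
  by rewrite -!mulmxA diag_mxC.
split; apply: (eq_on_Vw _ xV) => q y ltqw yH;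
  have yV : (y <= V w)%MS := submx_trans yH (submx_trans (Hp_sub_Vk ltqw) (Vk_sub ltqw));
  rewrite -Hgr_nat // in yH;
  by case: (tridiagonal_commutator (@Pgr_graded) (fun k => @Dpart_homogeneous t' k)
              (fun k => @Dpart_homogeneous t k) yH (commute y yV)).
Qed.

End Polarized.

Theorem theorem0p3 (F : fieldType) (d : nat) (V1 : 'M[F]_d) (w : nat)
  (* 1 ∈ V_1 *)
  (h1 : (oneZ F d <= V1)%MS)
  (* polarizing: q|_{V_k} non-degenerate for all k >= 1 *)
  (hpol : forall k, (1 <= k)%N -> nondeg (Vk V1 k))
  (* w is the least integer >= 1 with V_k = V_w for all k >= w *)
  (hw1 : (1 <= w)%N)
  (hstab : forall k, (w <= k)%N -> (Vk V1 k == Vk V1 w)%MS)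
  (hmin : forall w', (1 <= w')%N ->
            (forall k, (w' <= k)%N -> (Vk V1 k == Vk V1 w')%MS) -> (w <= w')%N) :
  forall t t' : 'rV[F]_d, (t <= Hp V1 w 0)%MS -> (t' <= Hp V1 w 0)%MS ->
  (* D = D^- + D^0 + D^+ on V_w *)
  (forall v, (v <= Vk V1 w)%MS ->
     Dmul t v = Dminus V1 w t v + Dzero V1 w t v + Dplus V1 w t v)
  (* D^0 preserves the grading, D^± shift it by ±1 *)
  /\ (forall p : nat, (p < w)%N -> forall x, (x <= Hp V1 w p)%MS ->
        [/\ (Dzero V1 w t x <= Hp V1 w p)%MS,
            (Dplus V1 w t x <= (if (p.+1 < w)%N then Hp V1 w p.+1 else 0))%MS
          & (Dminus V1 w t x <= (if (0 < p)%N then Hp V1 w p.-1 else 0))%MS])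
  (* (i) *)
  /\ (forall v, (v <= Vk V1 w)%MS ->
        Dplus V1 w t (Dplus V1 w t' v) = Dplus V1 w t' (Dplus V1 w t v)
        /\ Dminus V1 w t (Dminus V1 w t' v) = Dminus V1 w t' (Dminus V1 w t v))
  (* (ii) *)
  /\ (forall v, (v <= Vk V1 w)%MS ->
        Dzero V1 w t (Dplus V1 w t' v) + Dplus V1 w t (Dzero V1 w t' v)
          = Dzero V1 w t' (Dplus V1 w t v) + Dplus V1 w t' (Dzero V1 w t v)
        /\ Dzero V1 w t (Dminus V1 w t' v) + Dminus V1 w t (Dzero V1 w t' v)
          = Dzero V1 w t' (Dminus V1 w t v) + Dminus V1 w t' (Dzero V1 w t v))
  (* (iii) *)
  /\ (forall v, (v <= Vk V1 w)%MS ->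
        Dzero V1 w t (Dzero V1 w t' v) - Dzero V1 w t' (Dzero V1 w t v)
        + Dplus V1 w t (Dminus V1 w t' v) - Dplus V1 w t' (Dminus V1 w t v)
        + Dminus V1 w t (Dplus V1 w t' v) - Dminus V1 w t' (Dplus V1 w t v) = 0).
Proof.
move=> t t' tH0 t'H0.
have [tV1 t'V1] : (t <= V1)%MS /\ (t' <= V1)%MS.
  by split; apply: submx_trans (Hp_sub_Vk V1 hw1).
have commutator v := Dpart_commutator h1 hpol hstab tV1 t'V1 (x := v).
split; [|split; [|split; [|split]]].
- move=> v vV; rewrite DmulE DminusE DzeroE DplusE -!mulmxDr.
  exact (mul_diag_Vw_tridiag h1 hpol hstab tV1 vV).
- move=> p ltpw x; rewrite -(Hgr_nat V1 ltpw) => xH.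
  rewrite DzeroE DplusE DminusE -Hgr_succ -(Hgr_pred V1 ltpw).
  by split; [rewrite -[p%:Z]addr0 | |]; apply: Dpart_homogeneous xH.
- move=> v /commutator [hpp hmm _ _ _].
  by rewrite !DplusE !DminusE -!mulmxA hpp hmm.
- move=> v /commutator [_ _ hp0 hm0 _].
  by rewrite !DplusE !DminusE !DzeroE -!mulmxA -!mulmxDr hp0 hm0.
- move=> v /commutator [_ _ _ _ h0].
  by rewrite !DplusE !DminusE !DzeroE -!mulmxA subr_sum3 -!mulmxDr h0 subrr.
Qed.
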